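(* Consider the following process on a finite vertex set $V=\{1,\dots,p\}$. One maintains an ordered list of vertex subsets (''cliques'') $[C_1,\dots,C_m]$ and a set of outstanding vertices $O=V\setminus\bigcup_i C_i$; the associated graph $G$ on $V$ has an edge between two distinct vertices iff they lie in a common $C_i$. Initially the list is some list $C_I=[C_1,\dots,C_m]$ of nonempty subsets that is a perfect sequence of sets in the graph it induces (for instance a single nonempty subset). While $O\neq\emptyset$, a step chooses a clique $C_a$ in the list, a vertex $v\in O$ and a subset $S\subseteq C_a$, and then: if $S$ is a nonempty proper subset of $C_a$, the clique $S\cup\{v\}$ is appended at the end of the list; if $S=C_a$, the entry $C_a$ is replaced in place by $C_a\cup\{v\}$; if $S=\emptyset$, the clique $\{v\}$ is appended at the end of the list; finally $v$ is removed from $O$. (In the MFCF algorithm the triple $(C_a,v,S)$ is chosen by maximising a gain function, but the claim concerns any such choices.) Then at every stage, and in particular at termination, the ordered list of cliques is a perfect sequence of sets.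
   Context: An ordering $[C_1,\dots,C_m]$ of subsets has the running intersection property if for every $i$ with $2\le i\le m$ there is $j<i$ with $C_i\cap(C_1\cup\dots\cup C_{i-1})\subseteq C_j$; the sets $S_i=C_i\cap(C_1\cup\dots\cup C_{i-1})$ are the separators. The ordering is a perfect sequence of sets (perfect order) if it has the running intersection property and every separator $S_i$ is complete (all pairs of its vertices are adjacent) in the graph $G$. *)

From mathcomp Require Import all_boot.
Set Implicit Arguments. Unset Strict Implicit. Unset Printing Implicit Defensive.

Section MFCF.
Variable T : finType.

Definition induced_edge (L : seq {set T}) : rel T :=
  fun x y => (x != y) && has (fun C : {set T} => (x \in C) && (y \in C)) L.

(* C_1 u ... u C_{i} (0-indexed: union of the first i entries) *)
Definition prefix_union (L : seq {set T}) (i : nat) : {set T} :=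
  \bigcup_(C <- take i L) C.

Definition separator (L : seq {set T}) (i : nat) : {set T} :=
  nth set0 L i :&: prefix_union L i.

Definition running_intersection (L : seq {set T}) : Prop :=
  forall i, 0 < i < size L ->
    exists2 j, j < i & separator L i \subset nth set0 L j.

Definition complete_in (e : rel T) (S : {set T}) : Prop :=
  {in S &, forall x y, x != y -> e x y}.

Definition perfect_sequence (e : rel T) (L : seq {set T}) : Prop :=
  running_intersection L /\
  forall i, 0 < i < size L -> complete_in e (separator L i).

Definition outstanding (L : seq {set T}) : {set T} :=
  ~: \bigcup_(C <- L) C.

Definition mfcf_update (L : seq {set T}) (a : nat) (v : T) (S : {set T}) :=
  let Ca := nth set0 L a in
  if S == set0 then rcons L [set v]
  else if S == Ca then set_nth set0 L a (Ca :|: [set v])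
  else rcons L (v |: S).

Inductive mfcf_step (L : seq {set T}) : seq {set T} -> Prop :=
| MfcfStep (a : nat) (v : T) (S : {set T}) :
    a < size L -> v \in outstanding L -> S \subset nth set0 L a ->
    mfcf_step L (mfcf_update L a v S).

Inductive mfcf_reachable (L0 : seq {set T}) : seq {set T} -> Prop :=
| MfcfRefl : mfcf_reachable L0 L0
| MfcfTrans L L' : mfcf_reachable L0 L -> mfcf_step L L' -> mfcf_reachable L0 L'.

End MFCF.

From mathcomp Require Import all_boot.
Set Implicit Arguments. Unset Strict Implicit. Unset Printing Implicit Defensive.

(* Each step preserves perfection. Appending [v |: S] with [S \subset C_a]
   and [v] outstanding gives the new entry the separator [S], contained in
   [C_a] and complete because [C_a] is; enlarging [C_a] in place by an
   outstanding [v] changes no separator, since [v] lies in no other entry,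
   while the induced graph only gains edges. *)

Section PerfectSequence.
Variable T : finType.
Implicit Types (L : seq {set T}) (C X S : {set T}).

Lemma mem_prefix_union x L i :
  reflect (exists2 k, k < i & x \in nth set0 L k) (x \in prefix_union L i).
Proof.
rewrite /prefix_union; elim: L i => [|C L IH] i.
  by rewrite big_nil in_set0; apply: (iffP idP) => // -[k _]; rewrite nth_nil in_set0.
case: i => [|i]; first by rewrite take0 big_nil in_set0; apply: (iffP idP) => // -[].
rewrite /= big_cons in_setU; apply: (iffP orP).
  by case=> [xC|/IH [k ki xk]]; [exists 0 | exists k.+1].
by case=> -[|k] /= ki xk; [left | right; apply/IH; exists k].
Qed.

Lemma outstanding_notin_nth v L k : v \in outstanding L -> v \notin nth set0 L k.
Proof.
rewrite /outstanding in_setC; apply: contra => vk.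
have -> : \bigcup_(C <- L) C = prefix_union L (size L) by rewrite /prefix_union take_size.
apply/mem_prefix_union; exists k => //.
by case: ltnP => // kL; rewrite nth_default ?in_set0 in vk.
Qed.

Lemma outstanding_notin_prefix_union v L i :
  v \in outstanding L -> v \notin prefix_union L i.
Proof. by move=> vO; apply/mem_prefix_union => -[k _]; apply/negP/outstanding_notin_nth. Qed.

Lemma induced_edge_mem L C x y :
  C \in L -> x \in C -> y \in C -> x != y -> induced_edge L x y.
Proof. by move=> CL xC yC xy; apply/andP; split => //; apply/hasP; exists C; rewrite ?xC. Qed.

Lemma sub_induced_edge L L' x y :
  (forall C, C \in L -> exists2 C', C' \in L' & C \subset C') ->
  induced_edge L x y -> induced_edge L' x y.
Proof.
move=> covL /andP [xy /hasP [C CL /andP [xC yC]]].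
have [C' C'L CC'] := covL C CL.
by apply: (induced_edge_mem C'L) => //; apply: (subsetP CC').
Qed.

Lemma prefix_union_rcons L X i :
  i <= size L -> prefix_union (rcons L X) i = prefix_union L i.
Proof. by move=> iL; rewrite /prefix_union -cats1 takel_cat. Qed.

Lemma separator_rcons L X i :
  i < size L -> separator (rcons L X) i = separator L i.
Proof. by move=> iL; rewrite /separator prefix_union_rcons 1?ltnW // nth_rcons iL. Qed.

Lemma separator_rcons_last L X :
  separator (rcons L X) (size L) = X :&: prefix_union L (size L).
Proof. by rewrite /separator prefix_union_rcons // nth_rcons ltnn eqxx. Qed.

Lemma perfect_sequence_rcons L X j :
  perfect_sequence (induced_edge L) L -> j < size L ->
  X :&: prefix_union L (size L) \subset nth set0 L j ->
  perfect_sequence (induced_edge (rcons L X)) (rcons L X).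
Proof.
move=> [RI CP] jL sepX.
have edge_rcons x y : induced_edge L x y -> induced_edge (rcons L X) x y.
  by apply: sub_induced_edge => C CL; exists C; rewrite ?mem_rcons ?in_cons ?CL ?orbT.
rewrite /perfect_sequence /running_intersection size_rcons; split.
  move=> i /andP [i0]; rewrite ltnS leq_eqVlt => /orP [/eqP ->|iL].
    by exists j; rewrite // separator_rcons_last nth_rcons jL.
  have [k ki sepi] := RI i (introT andP (conj i0 iL)).
  by exists k; rewrite // separator_rcons // nth_rcons (ltn_trans ki iL).
move=> i /andP [i0]; rewrite ltnS leq_eqVlt => /orP [/eqP ->|iL].
  rewrite separator_rcons_last => x y /(subsetP sepX) xj /(subsetP sepX) yj.
  by apply: (@induced_edge_mem _ (nth set0 L j)); rewrite // mem_rcons in_cons mem_nth ?orbT.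
rewrite separator_rcons // => x y xi yi xy.
exact/edge_rcons/(CP i (introT andP (conj i0 iL))).
Qed.

Lemma perfect_sequence_rcons_outstanding L a v S :
  perfect_sequence (induced_edge L) L -> a < size L ->
  v \in outstanding L -> S \subset nth set0 L a ->
  perfect_sequence (induced_edge (rcons L (v |: S))) (rcons L (v |: S)).
Proof.
move=> PL aL vO SCa; apply: (perfect_sequence_rcons PL aL).
apply/subsetP => x; rewrite in_setI in_setU1 => /andP [/orP [/eqP ->|xS] xpre].
  by rewrite (negbTE (outstanding_notin_prefix_union _ vO)) in xpre.
exact: (subsetP SCa).
Qed.

Section GrowEntry.
Variables (L : seq {set T}) (a : nat) (v : T).
Hypotheses (aL : a < size L) (vO : v \in outstanding L).
Let L' := set_nth set0 L a (nth set0 L a :|: [set v]).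

Lemma size_grown : size L' = size L.
Proof. by rewrite size_set_nth; apply/maxn_idPr. Qed.

Lemma nth_grown_sub k : nth set0 L k \subset nth set0 L' k.
Proof. by rewrite nth_set_nth /=; case: eqP => [->|//]; apply: subsetUl. Qed.

Lemma nth_grown_neq k x : x \in nth set0 L' k -> x != v -> x \in nth set0 L k.
Proof.
rewrite nth_set_nth /=; case: eqP => [->|//].
by rewrite in_setU in_set1 => /orP [//|/eqP ->]; rewrite eqxx.
Qed.

Lemma separator_grown_sub i : separator L' i \subset separator L i.
Proof.
apply/subsetP => x; rewrite /separator !in_setI => /andP [xi /mem_prefix_union [k ki xk]].
have xv : x != v.
  apply: contraTneq ki => xv; subst x.
  have onlyin_a m : v \in nth set0 L' m -> m = a.
    by rewrite nth_set_nth /=; case: eqP => // _; rewrite (negbTE (outstanding_notin_nth _ vO)).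
  by rewrite (onlyin_a _ xi) (onlyin_a _ xk) ltnn.
rewrite nth_grown_neq //=; apply/mem_prefix_union; exists k => //.
exact: nth_grown_neq.
Qed.

Lemma perfect_sequence_grown :
  perfect_sequence (induced_edge L) L -> perfect_sequence (induced_edge L') L'.
Proof.
move=> [RI CP].
have edge_grown x y : induced_edge L x y -> induced_edge L' x y.
  apply: sub_induced_edge => C /(nthP set0) [k kL <-].
  by exists (nth set0 L' k); rewrite ?nth_grown_sub // mem_nth ?size_grown.
rewrite /perfect_sequence /running_intersection size_grown; split.
  move=> i iL; have [k ki sepi] := RI i iL; exists k => //.
  exact: subset_trans (separator_grown_sub i) (subset_trans sepi (nth_grown_sub k)).
move=> i iL x y xi yi xy.
by apply/edge_grown/(CP i iL); rewrite // (subsetP (separator_grown_sub i)).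
Qed.

End GrowEntry.

Lemma mfcf_step_perfect L L' :
  perfect_sequence (induced_edge L) L -> mfcf_step L L' ->
  perfect_sequence (induced_edge L') L'.
Proof.
move=> PL [a v S aL vO SCa]; rewrite /mfcf_update.
case: eqP => _; last case: eqP => _.
- by rewrite -[[set v]]setU0; apply: perfect_sequence_rcons_outstanding PL aL vO (sub0set _).
- exact: perfect_sequence_grown.
- exact: perfect_sequence_rcons_outstanding PL aL vO SCa.
Qed.

End PerfectSequence.

Theorem theorem13 (p : nat) (CI L : seq {set 'I_p}) :
  all (fun C => C != set0) CI ->
  perfect_sequence (induced_edge CI) CI ->
  mfcf_reachable CI L ->
  perfect_sequence (induced_edge L) L.
Proof.
move=> _ perfect_CI; elim=> // L1 L2 _ perfect_L1 step.
exact: mfcf_step_perfect perfect_L1 step.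
Qed.
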